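(* Assume the payoffs are normalized with $T=1$, $S=0$. Assume X uses a memory-one strategy $\mathbf p$ whose X Press-Dyson vector is $\mathbf p-(1,1,0,0)=\gamma(\bar\alpha\mathbf S_X+\bar\beta\mathbf S_Y+\mathbf 1)$ with $\gamma>0$. Let $-Z^{-1}=\bar\alpha+\bar\beta$, so that $P\le Z\le R$. Then for any strategy pattern played by Y and any associated limit distribution, $$\bar\alpha Z(s_X-s_Y)=s_Y-Z.$$ Furthermore, with $\kappa=\bar\alpha Z/(1+\bar\alpha Z)$ one has $\kappa<1$, $\kappa$ has the same sign as $\bar\alpha$, and for any strategy pattern played by Y and any associated limit distribution, $$\kappa(s_X-Z)=s_Y-Z.$$
   Context: Iterated Prisoner's Dilemma with normalized payoffs $T=1>R>P>S=0$ and $2R>1$; outcomes ordered $cc,cd,dc,dd$ (first letter X's play, second Y's; $c$ = cooperate, $d$ = defect); payoff vectors $\mathbf S_X=(R,0,1,P)$, $\mathbf S_Y=(R,1,0,P)$, $\mathbf 1=(1,1,1,1)$. A memory-one strategy for X is $\mathbf p\in[0,1]^4$, $p_i$ the probability X plays $c$ after outcome $i$ of the previous round. A strategy pattern for Y is any (possibly randomized, history-dependent) rule for Y's play. With $\mathbf v^n$ the distribution of the outcome of round $n$, a limit distribution is any limit point $\mathbf v$ of the Cesàro averages $\frac1n\sum_{k\le n}\mathbf v^k$, with expected payoffs $s_X=\langle\mathbf v\cdot\mathbf S_X\rangle$, $s_Y=\langle\mathbf v\cdot\mathbf S_Y\rangle$. *)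

From mathcomp Require Import all_boot all_order all_algebra.
From mathcomp Require Import reals.
Set Implicit Arguments. Unset Strict Implicit. Unset Printing Implicit Defensive.
Import Order.TTheory GRing.Theory Num.Theory.
Local Open Scope ring_scope.

(* Outcomes of one round, indexed 0,1,2,3 = cc, cd, dc, dd
   (first letter X's play, second Y's). *)
Definition outcome := 'I_4.

Definition X_coop (i : outcome) : bool := (val i < 2)%N.
Definition Y_coop (i : outcome) : bool := ~~ odd (val i).

Definition vec4 (R : Type) (a b c d : R) : outcome -> R :=
  fun i => match val i with 0 => a | 1 => b | 2 => c | _ => d end%N.

Section Game.
Variable R : realType.

(* Payoff vectors with T = 1, S = 0. *)
Definition SX (Rw Pw : R) : outcome -> R := vec4 Rw 0 1 Pw.
Definition SY (Rw Pw : R) : outcome -> R := vec4 Rw 1 0 Pw.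
Definition one4 : outcome -> R := fun _ => 1.
Definition e12 : outcome -> R := vec4 1 1 0 0.

Definition dot4 (u w : outcome -> R) : R := \sum_(i : outcome) u i * w i.

Definition act_prob (c : R) (coop : bool) : R := if coop then c else 1 - c.

(* X plays the memory-one strategy p, with initial cooperation probability p0;
   Y plays the behavioural strategy q : history -> prob. of cooperating.
   A history is the sequence of past outcomes, oldest first. *)
Definition step (p : outcome -> R) (p0 : R) (q : seq outcome -> R)
    (hist : seq outcome) (i : outcome) : R :=
  act_prob (if hist is o :: t then p (last o t) else p0) (X_coop i) *
  act_prob (q hist) (Y_coop i).

Fixpoint hprob_from p p0 q (prefix h : seq outcome) : R :=
  match h with
  | [::] => 1
  | o :: t => step p p0 q prefix o * hprob_from p p0 q (rcons prefix o) t
  end.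

(* v^(n+1): distribution of the outcome of round n+1. *)
Definition round_dist p p0 q (n : nat) (i : outcome) : R :=
  \sum_(h : n.-tuple outcome) hprob_from p p0 q [::] h * step p p0 q h i.

(* Cesàro average (1/n) sum_{k <= n} v^k, for n >= 1. *)
Definition cesaro p p0 q (n : nat) (i : outcome) : R :=
  (n%:R)^-1 * \sum_(k < n) round_dist p p0 q k i.

Definition limit_distribution p p0 q (v : outcome -> R) : Prop :=
  forall eps : R, 0 < eps -> forall N : nat, exists n : nat,
    (N < n)%N /\ forall i : outcome, `|cesaro p p0 q n i - v i| < eps.

Definition is_memory_one (p : outcome -> R) : Prop :=
  forall i, 0 <= p i <= 1.

Definition is_strategy_pattern (q : seq outcome -> R) : Prop :=
  forall h, 0 <= q h <= 1.

End Game.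

(* The probability that X cooperates in round k+1 is both the mass of the
   outcomes cc, cd under v^(k+1) and the expectation of p under v^k, so
   <v^(k+1), e12> = <v^k, p>.  Summing over k telescopes: the Cesàro averages
   satisfy |<v_n, p - e12>| <= 1/n, hence every limit distribution v is
   orthogonal to the Press-Dyson vector p - e12.  With the assumed form of that
   vector this is alpha s_X + beta s_Y + 1 = 0, and both claimed relations are
   rearrangements of it.  The bounds P <= Z <= R and the sign of 1 + alpha Z
   come from 0 <= p <= 1 at the outcomes cc, cd and dd. *)
From mathcomp Require Import all_boot all_order all_algebra.
From mathcomp Require Import reals.
From mathcomp Require Import ring lra.
Import Order.TTheory GRing.Theory Num.Theory.
Local Open Scope ring_scope.
Set Implicit Arguments. Unset Strict Implicit.

Definition cc : outcome := @Ordinal 4 0 isT.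
Definition cd : outcome := @Ordinal 4 1 isT.
Definition dc : outcome := @Ordinal 4 2 isT.
Definition dd : outcome := @Ordinal 4 3 isT.

Lemma big_outcome (V : nmodType) (F : outcome -> V) :
  \sum_(i : outcome) F i = F cc + F cd + F dc + F dd.
Proof.
rewrite (@big_ord_recl _ _ _ 3) (@big_ord_recl _ _ _ 2) (@big_ord_recl _ _ _ 1)
  (@big_ord_recl _ _ _ 0) big_ord0 addr0 !addrA.
by congr (_ + _ + _ + _); congr F; apply: val_inj.
Qed.

Lemma big_tuple0 (V : nmodType) (T : finType) (F : seq T -> V) :
  \sum_(t : 0.-tuple T) F t = F [::].
Proof.
by rewrite (big_pred1 [tuple]) // => t; rewrite [t]tuple0; apply/esym/eqxx.
Qed.

Lemma big_tupleS (V : nmodType) (T : finType) n (F : seq T -> V) :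
  \sum_(t : n.+1.-tuple T) F t = \sum_(x : T) \sum_(t : n.-tuple T) F (x :: t).
Proof.
rewrite pair_big.
rewrite (reindex (fun xt : T * n.-tuple T => [tuple of xt.1 :: xt.2])) //.
apply: onW_bij; exists (fun t : n.+1.-tuple T => (thead t, [tuple of behead t])).
  by case=> x t; congr pair; apply: val_inj.
by move=> t; rewrite [RHS]tuple_eta.
Qed.

Section Dot.
Variable R : realType.
Implicit Types u v w : outcome -> R.

Lemma dot4_unit_bounds u w :
  (forall i, 0 <= u i) -> dot4 u (one4 R) = 1 -> (forall i, 0 <= w i <= 1) ->
  0 <= dot4 u w <= 1.
Proof.
move=> u_ge0 u_sum w01; rewrite -u_sum; apply/andP; split.
  by apply: sumr_ge0 => i _; rewrite mulr_ge0 //; case/andP: (w01 i).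
by apply: ler_sum => i _; rewrite /one4 ler_wpM2l //; case/andP: (w01 i).
Qed.

Lemma norm_dot4B_le u v w e :
  (forall i, `|u i - v i| <= e) -> `|dot4 u w - dot4 v w| <= e * \sum_i `|w i|.
Proof.
move=> uv; rewrite /dot4 -sumrB mulr_sumr; apply: le_trans (ler_norm_sum _ _ _) _.
by apply: ler_sum => i _; rewrite -mulrBl normrM ler_wpM2r.
Qed.

Definition cluster_point (u : nat -> outcome -> R) v : Prop :=
  forall eps : R, 0 < eps -> forall N : nat, exists n : nat,
    (N < n)%N /\ forall i, `|u n i - v i| < eps.

Lemma cluster_point_dot (u : nat -> outcome -> R) v w a (C : R) :
  0 <= C -> cluster_point u v ->
  (forall n, (0 < n)%N -> `|dot4 (u n) w - a| <= C / n%:R) ->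
  dot4 v w = a.
Proof.
move=> C_ge0 uv un; apply/eqP; rewrite -subr_eq0 -normr_le0.
apply/ler_addgt0Pr => e e_gt0; rewrite add0r.
set M := 1 + \sum_i `|w i|.
have M_gt0 : 0 < M by rewrite ltr_wpDr // sumr_ge0.
have [n [Nn vn]] := uv _ (divr_gt0 e_gt0 (mulr_gt0 (ltr0Sn _ 1) M_gt0))
  (Num.Def.archi_bound (2 * C / e)).
have n_pos : (0 < n)%N by apply: leq_ltn_trans Nn.
have n_gt0 : 0 < n%:R :> R by rewrite ltr0n.
have near_v : `|dot4 v w - dot4 (u n) w| <= e / 2.
  have vn_le i : `|v i - u n i| <= e / (2 * M) by rewrite distrC ltW.
  apply: le_trans (norm_dot4B_le w vn_le) _.
  rewrite -mulrA ler_pM2l // invfM -mulrA ler_piMr ?invr_ge0 ?ler0n //.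
  by rewrite mulrC ler_pdivrMr // mul1r /M lerDr.
have near_a : C / n%:R <= e / 2.
  have : 2 * C / e < n%:R.
    apply: lt_le_trans (archi_boundP _) _; last by rewrite ler_nat ltnW.
    by rewrite divr_ge0 ?mulr_ge0 // ltW.
  rewrite ltr_pdivrMr // => lt_n.
  rewrite ler_pdivrMr // mulrAC ler_pdivlMr //.
  by rewrite mulrC [e * _]mulrC ltW.
have -> : dot4 v w - a = (dot4 v w - dot4 (u n) w) + (dot4 (u n) w - a).
  by rewrite addrA subrK.
rewrite [e]splitr.
by apply: le_trans (ler_normD _ _) _; rewrite lerD // (le_trans (un _ n_pos)).
Qed.

Lemma dot4_one u : dot4 u (one4 R) = \sum_i u i.
Proof. by apply: eq_bigr => i _; rewrite mulr1. Qed.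

Lemma act_prob_ge0 (c : R) b : 0 <= c <= 1 -> 0 <= act_prob c b.
Proof. by case/andP=> c_ge0 c_le1; case: b; rewrite /= ?subr_ge0. Qed.

End Dot.

Section Play.
Variables (R : realType) (p : outcome -> R) (p0 : R) (q : seq outcome -> R).

Definition x_coop_prob (h : seq outcome) : R :=
  if h is o :: t then p (last o t) else p0.

(* [dist_after prefix 0] is the round right after [prefix];
   [round_dist p p0 q n] is convertible to [dist_after [::] n]. *)
Definition dist_after (prefix : seq outcome) (n : nat) (i : outcome) : R :=
  \sum_(t : n.-tuple outcome)
    hprob_from p p0 q prefix t * step p p0 q (prefix ++ t) i.

Lemma dot4_dist_after0 prefix w :
  dot4 (dist_after prefix 0) w = dot4 (step p p0 q prefix) w.
Proof.
apply: eq_bigr => i _; congr (_ * _).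
rewrite /dist_after (big_tuple0 (fun t : seq outcome =>
  hprob_from p p0 q prefix t * step p p0 q (prefix ++ t) i)).
by rewrite /= mul1r cats0.
Qed.

Lemma dist_afterS prefix n i :
  dist_after prefix n.+1 i =
  \sum_o step p p0 q prefix o * dist_after (rcons prefix o) n i.
Proof.
rewrite /dist_after (big_tupleS _ (fun t : seq outcome =>
  hprob_from p p0 q prefix t * step p p0 q (prefix ++ t) i)).
apply: eq_bigr => o _; rewrite mulr_sumr.
by apply: eq_bigr => t _ /=; rewrite -cat_rcons mulrA.
Qed.

Lemma sum_step h : \sum_i step p p0 q h i = 1.
Proof. by rewrite big_outcome /step /act_prob /=; ring. Qed.

Lemma dot4_step_e12 h : dot4 (step p p0 q h) (e12 R) = x_coop_prob h.
Proof.
by rewrite /dot4 big_outcome /step /act_prob /e12 /vec4 /x_coop_prob /=; ring.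
Qed.

Lemma sum_hprob_from n prefix :
  \sum_(t : n.-tuple outcome) hprob_from p p0 q prefix t = 1.
Proof.
elim: n prefix => [|n IHn] prefix.
  by rewrite (big_tuple0 (hprob_from p p0 q prefix)).
rewrite (big_tupleS _ (hprob_from p p0 q prefix)) -(sum_step prefix).
apply: eq_bigr => o _.
by rewrite -mulr_sumr IHn mulr1.
Qed.

Lemma sum_dist_after prefix n : \sum_i dist_after prefix n i = 1.
Proof.
rewrite exchange_big -(sum_hprob_from n prefix); apply: eq_bigr => t _.
by rewrite -mulr_sumr sum_step mulr1.
Qed.

Lemma dot4_dist_afterS prefix n w :
  dot4 (dist_after prefix n.+1) w =
  \sum_o step p p0 q prefix o * dot4 (dist_after (rcons prefix o) n) w.
Proof.
rewrite /dot4; under eq_bigr => i _ do rewrite dist_afterS mulr_suml.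
rewrite exchange_big; apply: eq_bigr => o _; rewrite mulr_sumr.
by apply: eq_bigr => i _; rewrite mulrA.
Qed.

(* Both sides are the probability that X cooperates n+1 rounds after
   [prefix]. *)
Lemma dot4_dist_afterS_e12 n prefix :
  dot4 (dist_after prefix n.+1) (e12 R) = dot4 (dist_after prefix n) p.
Proof.
elim: n prefix => [|n IHn] prefix; rewrite dot4_dist_afterS.
  rewrite dot4_dist_after0; apply: eq_bigr => o _.
  rewrite dot4_dist_after0 dot4_step_e12.
  by case: prefix => [|x s] //=; rewrite last_rcons.
by rewrite dot4_dist_afterS; apply: eq_bigr => o _; rewrite IHn.
Qed.

Lemma dot4_cesaro n w :
  dot4 (cesaro p p0 q n) w = n%:R^-1 * \sum_(k < n) dot4 (round_dist p p0 q k) w.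
Proof.
rewrite /dot4 /cesaro; under eq_bigr => i _ do rewrite -mulrA mulr_suml.
by rewrite -mulr_sumr exchange_big.
Qed.

Lemma dot4_cesaro_one n : (0 < n)%N -> dot4 (cesaro p p0 q n) (one4 R) = 1.
Proof.
move=> n_gt0; rewrite dot4_cesaro.
under eq_bigr => k _ do rewrite dot4_one sum_dist_after.
by rewrite sumr_const card_ord mulVf // pnatr_eq0 -lt0n.
Qed.

Lemma dot4_cesaro_press_dyson n :
  dot4 (cesaro p p0 q n) (fun i => p i - e12 R i) =
  n%:R^-1 * (dot4 (round_dist p p0 q n) (e12 R)
             - dot4 (round_dist p p0 q 0) (e12 R)).
Proof.
rewrite dot4_cesaro -(telescope_sumr
  (fun k => dot4 (round_dist p p0 q k) (e12 R)) (leq0n n)) big_mkord.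
congr (_ * _).
apply: eq_bigr => k _.
rewrite [dot4 (round_dist _ _ _ k.+1) _]dot4_dist_afterS_e12.
by rewrite /dot4 -sumrB; apply: eq_bigr => i _; rewrite mulrBr.
Qed.

Section Probabilities.
Hypotheses (p01 : is_memory_one p) (p0_01 : 0 <= p0 <= 1)
  (q01 : is_strategy_pattern q).

Lemma step_ge0 h i : 0 <= step p p0 q h i.
Proof.
by rewrite mulr_ge0 // act_prob_ge0 //; case: h => [|o t] //=; apply: p01.
Qed.

Lemma hprob_from_ge0 t prefix : 0 <= hprob_from p p0 q prefix t.
Proof.
by elim: t prefix => [|o t IHt] prefix //=; rewrite mulr_ge0 ?step_ge0.
Qed.

Lemma dist_after_ge0 prefix n i : 0 <= dist_after prefix n i.
Proof.
by apply: sumr_ge0 => t _; rewrite mulr_ge0 ?hprob_from_ge0 ?step_ge0.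
Qed.

Lemma dot4_cesaro_press_dyson_le n :
  `|dot4 (cesaro p p0 q n) (fun i => p i - e12 R i)| <= n%:R^-1.
Proof.
rewrite dot4_cesaro_press_dyson normrM ger0_norm ?invr_ge0 ?ler0n //.
apply: ler_piMr; first by rewrite invr_ge0 ler0n.
have e12_01 i : 0 <= e12 R i <= 1.
  by rewrite /e12 /vec4; case: (val i) => [|[|[|]]]; rewrite /= ?ler01 ?lexx.
have coop_01 k : 0 <= dot4 (round_dist p p0 q k) (e12 R) <= 1.
  apply: dot4_unit_bounds => //; first exact: dist_after_ge0.
  by rewrite dot4_one sum_dist_after.
have /andP[cn_ge0 cn_le1] := coop_01 n; have /andP[c0_ge0 c0_le1] := coop_01 0%N.
by rewrite ler_norml; apply/andP; split; lra.
Qed.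

Lemma limit_distribution_press_dyson v :
  limit_distribution p p0 q v -> dot4 v (fun i => p i - e12 R i) = 0.
Proof.
move=> pv; apply: (cluster_point_dot ler01 pv) => n _.
by rewrite subr0 mul1r dot4_cesaro_press_dyson_le.
Qed.

End Probabilities.

Lemma limit_distribution_mass v :
  limit_distribution p p0 q v -> dot4 v (one4 R) = 1.
Proof.
move=> pv; apply: (cluster_point_dot (lexx 0) pv) => n n_gt0.
by rewrite dot4_cesaro_one // subrr normr0 mul0r.
Qed.

End Play.

Section Payoffs.
Variables (R : realType) (Rw Pw alpha beta gamma : R) (p : outcome -> R).
Hypotheses (p01 : is_memory_one p) (gamma_gt0 : 0 < gamma).
Hypothesis press_dyson_form : forall i, p i - e12 R i =
  gamma * (alpha * SX Rw Pw i + beta * SY Rw Pw i + one4 R i).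

Lemma press_dyson_coefficient_bounds :
  [/\ (alpha + beta) * Rw + 1 <= 0, 0 <= (alpha + beta) * Pw + 1 & beta + 1 <= 0].
Proof.
have := press_dyson_form cc; have := press_dyson_form cd.
have := press_dyson_form dd; rewrite /SX /SY /e12 /one4 /vec4 /=.
move: (p01 cc) (p01 cd) (p01 dd) => /andP[_ p_cc] /andP[_ p_cd] /andP[p_dd _].
rewrite subr0 => E_dd E_cd E_cc.
have sign_cc : alpha * Rw + beta * Rw + 1 <= 0.
  by rewrite -(pmulr_rle0 _ gamma_gt0) -E_cc subr_le0.
have sign_cd : alpha * 0 + beta * 1 + 1 <= 0.
  by rewrite -(pmulr_rle0 _ gamma_gt0) -E_cd subr_le0.
have sign_dd : 0 <= alpha * Pw + beta * Pw + 1.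
  by rewrite -(pmulr_rge0 _ gamma_gt0) -E_dd.
by split; lra.
Qed.

Lemma limit_distribution_score_relation p0 q v :
  0 <= p0 <= 1 -> is_strategy_pattern q -> limit_distribution p p0 q v ->
  alpha * dot4 v (SX Rw Pw) + beta * dot4 v (SY Rw Pw) + 1 = 0.
Proof.
move=> p0_01 q01 pv.
have := limit_distribution_press_dyson p01 p0_01 q01 pv.
have : dot4 v (fun i => p i - e12 R i) =
    gamma * (alpha * dot4 v (SX Rw Pw) + beta * dot4 v (SY Rw Pw)
             + dot4 v (one4 R)).
  by rewrite /dot4 !big_outcome !press_dyson_form; ring.
move=> -> /eqP; rewrite (limit_distribution_mass pv) mulf_eq0 gt_eqF //=.
exact: eqP.
Qed.

End Payoffs.

Section ZeroDeterminant.
Variable R : realFieldType.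

Lemma opp_inv_bounds (s P Rw : R) :
  0 < P -> P < Rw -> s * Rw + 1 <= 0 -> 0 <= s * P + 1 ->
  s < 0 /\ P <= - s^-1 <= Rw.
Proof.
move=> P_gt0 PRw sRw sP; have s_lt0 : s < 0 by nra.
have sZ : s * - s^-1 = -1 by rewrite mulrN mulfV ?lt_eqF.
by split=> //; apply/andP; split; nra.
Qed.

Lemma zero_determinant_relation (a b Z sX sY : R) :
  Z * (a + b) = -1 -> a * sX + b * sY + 1 = 0 -> a * Z * (sX - sY) = sY - Z.
Proof.
move=> Zab rel; apply/eqP; rewrite -subr_eq0.
have -> : a * Z * (sX - sY) - (sY - Z) =
    Z * (a * sX + b * sY + 1) - sY * (Z * (a + b) + 1) by ring.
by rewrite rel Zab addNr !mulr0 subrr.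
Qed.

Lemma kappa_relation (c sX sY Z : R) :
  1 + c != 0 -> c * (sX - sY) = sY - Z -> c / (1 + c) * (sX - Z) = sY - Z.
Proof.
move=> c1_neq0 rel.
have shifted : c * (sX - Z) = (1 + c) * (sY - Z).
  transitivity (c * (sX - sY) + c * (sY - Z)); first ring.
  by rewrite rel; ring.
by rewrite mulrAC shifted [(1 + c) * _]mulrC mulfK.
Qed.

Lemma kappa_lt1 (c : R) : 0 < 1 + c -> c / (1 + c) < 1.
Proof. by move=> c1_gt0; rewrite ltr_pdivrMr // mul1r ltrDr ltr01. Qed.

Lemma sg_kappa (a Z : R) :
  0 < Z -> 0 < 1 + a * Z -> Num.sg (a * Z / (1 + a * Z)) = Num.sg a.
Proof.
move=> Z_gt0 D_gt0.
by rewrite sgrM sgrV (gtr0_sg D_gt0) sgrM (gtr0_sg Z_gt0) !mulr1.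
Qed.

End ZeroDeterminant.

Theorem proposition3p2 (R : realType) (Rw Pw : R) (p : outcome -> R)
    (alpha beta gamma : R) :
  0 < Pw -> Pw < Rw -> Rw < 1 -> 1 < 2 * Rw ->
  is_memory_one p ->
  0 < gamma ->
  (forall i, p i - e12 R i =
     gamma * (alpha * SX Rw Pw i + beta * SY Rw Pw i + one4 R i)) ->
  let Z := - (alpha + beta)^-1 in
  (Pw <= Z <= Rw) /\
  (forall (p0 : R) (q : seq outcome -> R) (v : outcome -> R),
     0 <= p0 <= 1 -> is_strategy_pattern q ->
     limit_distribution p p0 q v ->
     alpha * Z * (dot4 v (SX Rw Pw) - dot4 v (SY Rw Pw))
       = dot4 v (SY Rw Pw) - Z) /\
  (let kappa := alpha * Z / (1 + alpha * Z) in
   1 + alpha * Z != 0 /\ kappa < 1 /\ Num.sg kappa = Num.sg alpha /\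
   (forall (p0 : R) (q : seq outcome -> R) (v : outcome -> R),
     0 <= p0 <= 1 -> is_strategy_pattern q ->
     limit_distribution p p0 q v ->
     kappa * (dot4 v (SX Rw Pw) - Z) = dot4 v (SY Rw Pw) - Z)).
Proof.
move=> Pw_gt0 PwRw _ _ p01 gamma_gt0 pd_form Z.
have [sRw sPw beta_le] := press_dyson_coefficient_bounds p01 gamma_gt0 pd_form.
have [s_lt0 Z_bounds] := opp_inv_bounds Pw_gt0 PwRw sRw sPw.
have Zs : Z * (alpha + beta) = -1 by rewrite mulNr mulVf ?lt_eqF.
have Z_gt0 : 0 < Z by rewrite oppr_gt0 invr_lt0.
(* 1 + alpha Z = - beta Z, and beta <= -1 *)
have D_gt0 : 0 < 1 + alpha * Z by nra.
have zd (p0 : R) (q : seq outcome -> R) (v : outcome -> R) :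
    0 <= p0 <= 1 -> is_strategy_pattern q ->
    limit_distribution p p0 q v ->
    alpha * Z * (dot4 v (SX Rw Pw) - dot4 v (SY Rw Pw)) = dot4 v (SY Rw Pw) - Z.
  move=> p0_01 q01 pv; apply: zero_determinant_relation Zs _.
  exact: (limit_distribution_score_relation p01 gamma_gt0 pd_form p0_01 q01 pv).
split=> //; split=> // kappa; split; first by rewrite gt_eqF.
split; first exact: kappa_lt1.
split; first exact: sg_kappa.
move=> p0 q v p0_01 q01 pv; apply: kappa_relation; first by rewrite gt_eqF.
exact: (zd _ _ _ p0_01 q01 pv).
Qed.
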